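(* Let $S$ be a finite pseudo-nilpotent semigroup with a fixed principal series $S=S_1\supset\cdots\supset S_m\supset S_{m+1}=\emptyset$, and let $a,b\in S$. If there is an edge in $\mathcal{N}_S$ between $a$ and $b$, then there exists a stem $S^{(i)}$ with $a,b\in S^{(i)}$.
   Context: For a semigroup $S$, $S^1$ denotes $S$ with an identity adjoined (if $S$ has none). For $x,y\in S$, $z_1,z_2,\ldots\in S^1$ define $\lambda_0=x$, $\rho_0=y$, $\lambda_{n+1}=\lambda_n z_{n+1}\rho_n$, $\rho_{n+1}=\rho_n z_{n+1}\lambda_n$; write $\lambda_n(x,y,z_1,\ldots,z_n)$, $\rho_n(x,y,z_1,\ldots,z_n)$. $S$ is nilpotent (Mal'cev) if for some $n\ge1$, $\lambda_n(a,b,c_1,\ldots,c_n)=\rho_n(a,b,c_1,\ldots,c_n)$ for all $a,b\in S$, $c_i\in S^1$. $\langle X\rangle$ is the subsemigroup generated by $X$. The upper non-nilpotent graph $\mathcal{N}_S$ has vertex set $S$ and an edge between $x,y$ iff $\langle x,y\rangle$ is not nilpotent. The empty set counts as an ideal; $S/I$ is the Rees factor, $S/\emptyset=S$. $S$ is pseudo-nilpotent if: whenever $x,y\in S$, $w_1,\ldots,w_m\in S^1$, $T$ is the subsemigroup generated by $x,y$ and the $w_i$ lying in $S$, $I$ is a (possibly empty) ideal of $T$, and $t<m$ are non-negative integers with (writing $\lambda_k=\lambda_k(x,y,w_1,\ldots,w_k)$, $\rho_k$ likewise) $\lambda_t\neq\rho_t$, $(\lambda_t,\rho_t)=(\lambda_m,\rho_m)$,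 $\lambda_m,\rho_m\notin I$, then for all $0\le i\le m$ there is an edge in $\mathcal{N}_{T/I}$ between (the images of) $\lambda_i$ and $\rho_i$. A principal series means each $S_i$ is an ideal of $S$ and no ideal lies strictly between $S_{i+1}$ and $S_i$; principal factors are $S_i/S_{i+1}$. For $1\le j\le m$ put $F^{(j)}=\{s\in S\setminus S_j: st\notin S_{j+1}\text{ or }ts\notin S_{j+1}\text{ for some }t\in S_j\setminus S_{j+1}\}$ and $S^{(j)}=F^{(j)}\cup(S_j\setminus S_{j+1})$. $S_i\setminus S_{i+1}$ is a root if $S_i/S_{i+1}$ is not nilpotent and $\langle a,b\rangle$ is nilpotent for all $a\in S_i\setminus S_{i+1}$, $b\in S_{i+1}$; in that case $S^{(i)}$ is called a stem. *)

From mathcomp Require Import all_boot.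
Set Implicit Arguments. Unset Strict Implicit. Unset Printing Implicit Defensive.

Section Semigroups.
Variable U : finType.
Variable op : U -> U -> U.

(* S^1: an element of S^1 is [option U]; [None] is the adjoined identity.
   x z y for z in S^1 *)
Definition mul1 (z : option U) (x y : U) : U :=
  match z with Some c => op (op x c) y | None => op x y end.

Definition lr (x y : U) (zs : seq (option U)) : U * U :=
  foldl (fun p z => (mul1 z p.1 p.2, mul1 z p.2 p.1)) (x, y) zs.

Definition in1 (A : {set U}) (z : option U) : bool :=
  match z with Some c => c \in A | None => true end.

(* The subsemigroup A (closed under op) is nilpotent in the sense of Mal'cev. *)
Definition nilpotent_on (A : {set U}) : Prop :=
  exists n : nat, 0 < n /\
    forall a b : U, a \in A -> b \in A ->
    forall zs : seq (option U), size zs = n -> all (in1 A) zs ->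
      (lr a b zs).1 = (lr a b zs).2.

Definition closedb (B : {set U}) : bool :=
  [forall x, forall y, (x \in B) ==> (y \in B) ==> (op x y \in B)].

Definition gen (X : {set U}) : {set U} :=
  [set x | [forall B : {set U}, ((X \subset B) && closedb B) ==> (x \in B)]].

Definition nn_edge (x y : U) : Prop := ~ nilpotent_on (gen [set x; y]).

(* I is a (possibly empty) ideal of the subsemigroup A *)
Definition ideal_of (A I : {set U}) : Prop :=
  I \subset A /\
  forall s i, s \in A -> i \in I -> (op s i \in I) /\ (op i s \in I).

End Semigroups.

(* Rees factor A / I, realised on [option U]: [None] is the zero
   (the class of I), [Some x] is x for x in A \ I. *)
Definition rees_img (U : finType) (I : {set U}) (x : U) : option U :=
  if x \in I then None else Some x.

Definition rees_op (U : finType) (op : U -> U -> U) (I : {set U})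
    (x y : option U) : option U :=
  match x, y with
  | Some a, Some b => rees_img I (op a b)
  | _, _ => None
  end.

Definition rees_dom (U : finType) (A I : {set U}) : {set option U} :=
  [set rees_img I x | x in A].

Definition has_identity (T : finType) (op : T -> T -> T) : bool :=
  [exists e, [forall x, (op e x == x) && (op x e == x)]].

(* pseudo-nilpotency.  w_i in S^1 is encoded as [option T]; if S already has
   an identity then S^1 = S and all w_i must be genuine elements [Some _]. *)
Definition pseudo_nilpotent (T : finType) (op : T -> T -> T) : Prop :=
  forall (x y : T) (ws : seq (option T)),
  (has_identity op -> all (fun z => z != None) ws) ->
  let Tsub := gen op ([set x; y] :|: [set c | Some c \in ws]) in
  let lam k := (lr op x y (take k ws)).1 in
  let rho k := (lr op x y (take k ws)).2 in
  forall I : {set T}, ideal_of op Tsub I ->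
  forall t : nat, t < size ws ->
  lam t <> rho t ->
  (lam t, rho t) = (lam (size ws), rho (size ws)) ->
  lam (size ws) \notin I -> rho (size ws) \notin I ->
  forall i, i <= size ws ->
    nn_edge (rees_op op I) (rees_img I (lam i)) (rees_img I (rho i)).

(* Principal series S = S_1 ⊃ ... ⊃ S_m ⊃ S_{m+1} = ∅ (indices 1..m+1 used). *)
Definition principal_series (T : finType) (op : T -> T -> T)
    (Ser : nat -> {set T}) (m : nat) : Prop :=
  Ser 1 = [set: T] /\ Ser m.+1 = set0 /\
  (forall i, 1 <= i <= m.+1 -> ideal_of op [set: T] (Ser i)) /\
  (forall i, 1 <= i <= m ->
     Ser i.+1 \proper Ser i /\
     forall J : {set T}, ideal_of op [set: T] J ->
       Ser i.+1 \subset J -> J \subset Ser i -> J = Ser i.+1 \/ J = Ser i).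

Definition Fj (T : finType) (op : T -> T -> T) (Ser : nat -> {set T}) (j : nat)
  : {set T} :=
  [set s in ~: Ser j | [exists t in Ser j :\: Ser j.+1,
      (op s t \notin Ser j.+1) || (op t s \notin Ser j.+1)]].

Definition stem_set (T : finType) (op : T -> T -> T) (Ser : nat -> {set T})
    (j : nat) : {set T} :=
  Fj op Ser j :|: (Ser j :\: Ser j.+1).

Definition is_root (T : finType) (op : T -> T -> T) (Ser : nat -> {set T})
    (i : nat) : Prop :=
  ~ nilpotent_on (rees_op op (Ser i.+1)) (rees_dom (Ser i) (Ser i.+1)) /\
  forall a b, a \in Ser i :\: Ser i.+1 -> b \in Ser i.+1 ->
    nilpotent_on op (gen op [set a; b]).

(* A non-nilpotent finite semigroup contains a cycle: x <> y and w_1, ..., w_n in S^1 with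
   (lambda_n, rho_n)(x, y, w) = (x, y).  For a cycle in <a, b>, both x and y lie in one
   J-class S_k \ S_{k+1}, and pseudo-nilpotency (applied in the Rees quotient by S_{k+1})
   makes the principal factor S_k / S_{k+1} non-nilpotent.  The cycle cannot live in the
   commutative semigroup <b>, so a divides x, y or w_1, which gives a t in S_k with
   a t or t a outside S_{k+1}: a lies in S^{(k)}, and so does b.  If S_k \ S_{k+1} is not a
   root, some c in it and d in S_{k+1} generate a non-nilpotent subsemigroup, and the same
   argument puts c (and d) in S^{(k')} for some non-nilpotent factor with k' > k; a and b
   follow c there, since each divides an element of the J-class of c.  As k increases, the
   process stops at a root. *)

From mathcomp Require Import all_boot zify.
From Stdlib Require Import Classical.
Set Implicit Arguments. Unset Strict Implicit. Unset Printing Implicit Defensive.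

Section Generated.
Variables (T : finType) (op : T -> T -> T).

Lemma closedbP (B : {set T}) :
  reflect (forall x y, x \in B -> y \in B -> op x y \in B) (closedb op B).
Proof.
apply: (iffP forallP) => [cB x y xB yB | cB x].
  by move/forallP: (cB x) => /(_ y); rewrite xB yB.
by apply/forallP=> y; apply/implyP=> xB; apply/implyP; apply: cB.
Qed.

Lemma subset_gen (X : {set T}) : X \subset gen op X.
Proof.
apply/subsetP=> x xX; rewrite inE; apply/forall_inP=> B /andP[/subsetP XB _].
exact: XB.
Qed.

Lemma gen_min (X B : {set T}) : X \subset B -> closedb op B -> gen op X \subset B.
Proof. by move=> XB cB; apply/subsetP=> x; rewrite inE => /forallP/(_ B); rewrite XB cB. Qed.

Lemma closedb_gen (X : {set T}) : closedb op (gen op X).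
Proof.
apply/closedbP=> x y; rewrite !inE => /forall_inP xX /forall_inP yX.
apply/forall_inP=> B XcB; have /andP[_ /closedbP cB] := XcB.
exact: cB (xX B XcB) (yX B XcB).
Qed.

Lemma mem_gen_op (X : {set T}) x y :
  x \in gen op X -> y \in gen op X -> op x y \in gen op X.
Proof. exact/closedbP/closedb_gen. Qed.

Lemma lr_cons x y z zs :
  lr op x y (z :: zs) = lr op (mul1 op z x y) (mul1 op z y x) zs.
Proof. by []. Qed.

Lemma lr_cat x y s1 s2 :
  lr op x y (s1 ++ s2) = lr op (lr op x y s1).1 (lr op x y s1).2 s2.
Proof. by rewrite /lr foldl_cat; case: (foldl _ _ s1). Qed.

Lemma lr_diag x zs : (lr op x x zs).1 = (lr op x x zs).2.
Proof. by elim: zs x => [|z zs IH] x //=; rewrite lr_cons IH. Qed.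

Lemma mul1_closed (A : {set T}) z x y : closedb op A ->
  in1 A z -> x \in A -> y \in A -> mul1 op z x y \in A.
Proof. by move=> /closedbP cA; case: z => [c|] /= *; rewrite ?cA. Qed.

Lemma lr_closed (A : {set T}) x y zs : closedb op A -> x \in A -> y \in A ->
  all (in1 A) zs -> (lr op x y zs).1 \in A /\ (lr op x y zs).2 \in A.
Proof.
move=> cA; elim: zs x y => [|z zs IH] x y xA yA //= /andP[zA zsA].
by rewrite lr_cons; apply: IH; rewrite // mul1_closed.
Qed.

Definition lr_cycle x y ws := [/\ x != y, 0 < size ws & lr op x y ws = (x, y)].

Lemma lr_take_collision x y (zs : seq (option T)) : #|{: T * T}| <= size zs ->
  exists i j, [/\ i < j, j <= size zs & lr op x y (take i zs) = lr op x y (take j zs)].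
Proof.
move=> large; pose f (i : 'I_(size zs).+1) := lr op x y (take i zs).
have /injectivePn[i [j neij Efij]] : ~~ injectiveb f.
  by apply/injectiveP=> /leq_card; rewrite card_ord ltnNge large.
have lejs (k : 'I_(size zs).+1) : k <= size zs by rewrite -ltnS.
case: (ltngtP i j) => [ltij|ltji|/val_inj Eij]; last by rewrite Eij eqxx in neij.
  by exists i, j.
by exists j, i.
Qed.

Lemma non_nilpotent_cycle (A : {set T}) : closedb op A -> ~ nilpotent_on op A ->
  exists x y ws, [/\ x \in A, y \in A, all (in1 A) ws & lr_cycle x y ws].
Proof.
move=> cA nnA; apply: NNPP => nocycle; apply: nnA.
exists #|{: T * T}|.+1; split=> // a b aA bA zs sz zsA.
have large : #|{: T * T}| <= size zs by rewrite sz.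
have [i [j [ltij lejs Eij]]] := lr_take_collision a b large.
have zsE : zs = take i zs ++ drop i (take j zs) ++ drop j zs.
  by rewrite catA -{1}(take_takel _ (ltnW ltij)) !cat_take_drop.
have all_sub s : subseq s zs -> all (in1 A) s.
  by move=> /mem_subseq sub; apply/allP=> z /sub; apply: (allP zsA).
case: (eqVneq (lr op a b (take i zs)).1 (lr op a b (take i zs)).2) => [Eab | neab].
  by rewrite zsE lr_cat Eab lr_diag.
have [xA yA] := lr_closed cA aA bA (all_sub _ (take_subseq zs i)).
exfalso; apply: nocycle.
exists (lr op a b (take i zs)).1, (lr op a b (take i zs)).2, (drop i (take j zs)).
split=> //; first by apply: all_sub; apply: subseq_trans (drop_subseq _ _) (take_subseq _ _).
split=> //; first by rewrite size_drop size_takel // subn_gt0.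
by rewrite -lr_cat -{1}(take_takel _ (ltnW ltij)) cat_take_drop -Eij; case: lr.
Qed.

End Generated.

Section Nilpotent.
Variable T : finType.

Lemma nilpotent_onS (op : T -> T -> T) (A B : {set T}) :
  A \subset B -> nilpotent_on op B -> nilpotent_on op A.
Proof.
move=> /subsetP AB [n [n_gt0 nilB]]; exists n; split=> // a b aA bA zs sz zsA.
apply: nilB; rewrite ?AB //; apply/allP=> -[c|] // /(allP zsA).
exact: AB.
Qed.

Lemma eq_lr_on (op1 op2 : T -> T -> T) (B : {set T}) x y zs : closedb op1 B ->
  {in B &, op1 =2 op2} -> x \in B -> y \in B -> all (in1 B) zs ->
  lr op1 x y zs = lr op2 x y zs.
Proof.
move=> cB Eop; have /closedbP cB' := cB.
have Emul1 z p q : in1 B z -> p \in B -> q \in B -> mul1 op1 z p q = mul1 op2 z p q.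
  by case: z => [c|] /= zB pB qB; rewrite -!Eop ?cB'.
elim: zs x y => [|z zs IH] x y xB yB //= /andP[zB zsB].
by rewrite !lr_cons -!Emul1 // IH // mul1_closed.
Qed.

Lemma nilpotent_on_eq (op1 op2 : T -> T -> T) (B : {set T}) : closedb op1 B ->
  {in B &, op1 =2 op2} -> nilpotent_on op2 B -> nilpotent_on op1 B.
Proof.
move=> cB Eop [n [n_gt0 nilB]]; exists n; split=> // a b aB bB zs sz zsB.
by rewrite (eq_lr_on cB Eop) // nilB.
Qed.

End Nilpotent.

Section Divisibility.
Variables (T : finType) (op : T -> T -> T).
Hypothesis opA : associative op.

Definition lmul1 (p : option T) x := if p is Some p' then op p' x else x.
Definition rmul1 x (q : option T) := if q is Some q' then op x q' else x.

Lemma lmul1A p x y : op (lmul1 p x) y = lmul1 p (op x y).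
Proof. by case: p => [p|] //=; rewrite opA. Qed.

Lemma rmul1A x y q : op x (rmul1 y q) = rmul1 (op x y) q.
Proof. by case: q => [q|] //=; rewrite opA. Qed.

Lemma lmul1_rmul1 p x q : lmul1 p (rmul1 x q) = rmul1 (lmul1 p x) q.
Proof. by case: p => [p|]; case: q => [q|] //=; rewrite opA. Qed.

Lemma rmul1_op x q y : op (rmul1 x q) y = op x (lmul1 q y).
Proof. by case: q => [q|] //=; rewrite opA. Qed.

Lemma mul1E z x y : mul1 op z x y = op x (lmul1 z y).
Proof. by case: z => [c|] //=; rewrite opA. Qed.

Definition ideal (I : {set T}) := forall s x, x \in I -> op s x \in I /\ op x s \in I.

Section Ideal.
Variables (I : {set T}) (idI : ideal I).

Lemma ideal_mull s x : x \in I -> op s x \in I. Proof. by case/(idI s). Qed.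
Lemma ideal_mulr s x : x \in I -> op x s \in I. Proof. by case/(idI s). Qed.
Lemma ideal_lmul1 p x : x \in I -> lmul1 p x \in I.
Proof. by case: p => [p|] //=; apply: ideal_mull. Qed.
Lemma ideal_rmul1 x q : x \in I -> rmul1 x q \in I.
Proof. by case: q => [q|] //=; apply: ideal_mulr. Qed.

Lemma ideal_closedb : closedb op I.
Proof. by apply/closedbP=> x y _; apply: ideal_mull. Qed.

End Ideal.

Definition factor u z := [exists p, exists q, z == lmul1 p (rmul1 u q)].

Lemma factor_refl u : factor u u.
Proof. by apply/existsP; exists None; apply/existsP; exists None. Qed.

Lemma factor_mull s u z : factor u z -> factor u (op s z).
Proof.
case/existsP=> p /existsP[q /eqP->]; apply/existsP; exists (Some (rmul1 s p)).
by apply/existsP; exists q; case: p => [p|] /=; rewrite ?opA.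
Qed.

Lemma factor_mulr u z s : factor u z -> factor u (op z s).
Proof.
case/existsP=> p /existsP[q /eqP->]; apply/existsP; exists p.
by apply/existsP; exists (Some (lmul1 q s)); rewrite lmul1A rmul1_op.
Qed.

Lemma gen2_factor u v z : z \in gen op [set u; v] -> z \in gen op [set v] \/ factor u z.
Proof.
pose F := [set z | factor u z]; have inF w : (w \in F) = factor u w by rewrite inE.
suff /subsetP genF : gen op [set u; v] \subset gen op [set v] :|: F.
  by move=> /genF; rewrite in_setU inF => /orP.
apply: gen_min.
  apply/subsetP=> w /set2P[->|->]; rewrite in_setU inF ?factor_refl ?orbT //.
  by rewrite (subsetP (subset_gen _ _)) ?set11.
apply/closedbP=> x y; rewrite !in_setU !inF.
case/orP=> [xv /orP[yv|uy]|ux _]; last by rewrite factor_mulr ?orbT.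
  by rewrite mem_gen_op.
by rewrite factor_mull ?orbT.
Qed.

Lemma gen1_comm v x y : x \in gen op [set v] -> y \in gen op [set v] -> op x y = op y x.
Proof.
have comm_v : gen op [set v] \subset [set z | op z v == op v z].
  apply: gen_min; first by apply/subsetP=> z; rewrite !inE => /eqP->.
  by apply/closedbP=> a b; rewrite !inE => /eqP va /eqP vb; rewrite -opA vb opA va opA.
have comm_gen : gen op [set v] \subset [set z | [forall w in gen op [set v], op z w == op w z]].
  apply: gen_min.
    apply/subsetP=> z; rewrite !inE => /eqP-> {z}; apply/forall_inP=> w /(subsetP comm_v).
    by rewrite inE eq_sym.
  apply/closedbP=> a b; rewrite !inE => /forall_inP ca /forall_inP cb.
  by apply/forall_inP=> w wv; rewrite -opA (eqP (cb w wv)) opA (eqP (ca w wv)) opA.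
by move=> /(subsetP comm_gen); rewrite inE => /forall_inP cx /cx /eqP.
Qed.

Lemma lr_rmul1 x y zs :
  exists r r', (lr op x y zs).1 = rmul1 x r /\ (lr op x y zs).2 = rmul1 y r'.
Proof.
elim: zs x y => [|z zs IH] x y; first by exists None, None.
have [r [r' [-> ->]]] := IH (mul1 op z x y) (mul1 op z y x).
exists (Some (rmul1 (lmul1 z y) r)), (Some (rmul1 (lmul1 z x) r')).
by rewrite !mul1E /= -!rmul1A.
Qed.

Lemma lr_cycle_fixed x y w ws : lr op x y (w :: ws) = (x, y) ->
  exists r r', x = op x (rmul1 (lmul1 w y) r) /\ y = op y (rmul1 (lmul1 w x) r').
Proof.
rewrite lr_cons => cyc; have [r [r' []]] := lr_rmul1 (mul1 op w x y) (mul1 op w y x) ws.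
by rewrite cyc !mul1E /= -!rmul1A => Ex Ey; exists r, r'.
Qed.

(* A cycle cannot live in the commutative semigroup <v>. *)
Lemma lr_cycle_factor u v x y w ws :
  x \in gen op [set u; v] -> y \in gen op [set u; v] -> in1 (gen op [set u; v]) w ->
  lr_cycle op x y (w :: ws) ->
  [\/ factor u x, factor u y | exists2 c, w = Some c & factor u c].
Proof.
move=> xuv yuv wuv [nexy _ cyc]; apply: NNPP => nofactor.
have [xv|] := gen2_factor xuv; last by move=> ux; apply: nofactor; constructor 1.
have [yv|] := gen2_factor yuv; last by move=> uy; apply: nofactor; constructor 2.
have Emul1 : mul1 op w x y = mul1 op w y x.
  case: w wuv cyc nofactor => [c|] /= cuv _ nofactor; last exact: gen1_comm xv yv.
  have [cv|uc] := gen2_factor cuv; last by exfalso; apply: nofactor; constructor 3; exists c.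
  by rewrite -!opA (gen1_comm cv yv) (gen1_comm cv xv) !opA (gen1_comm xv yv).
move: cyc; rewrite lr_cons Emul1 => cyc.
by have := lr_diag op (mul1 op w y x) ws; rewrite cyc /= => Exy; rewrite Exy eqxx in nexy.
Qed.

End Divisibility.

Section PrincipalSeries.
Variables (T : finType) (op : T -> T -> T).
Hypothesis opA : associative op.
Variables (Ser : nat -> {set T}) (m : nat).
Hypothesis serS : principal_series op Ser m.

Lemma ser_ideal_range i : 1 <= i <= m.+1 -> ideal op (Ser i).
Proof.
by case: serS => _ [_ [idS _]] /idS[_ idSi] s x; apply: idSi; rewrite inE.
Qed.

Lemma ser_ideal k : 1 <= k <= m -> ideal op (Ser k).
Proof. by move=> km; apply: ser_ideal_range; lia. Qed.

Lemma ser_idealS k : 1 <= k <= m -> ideal op (Ser k.+1).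
Proof. by move=> km; apply: ser_ideal_range; lia. Qed.

Lemma ser_subS k : 1 <= k <= m -> Ser k.+1 \subset Ser k.
Proof. by case: serS => _ [_ [_ maxS]] /maxS[/proper_sub]. Qed.

Lemma ser_mono i j : 0 < i <= j -> j <= m.+1 -> Ser j \subset Ser i.
Proof.
elim: j => [|j IH] ij jm; first by lia.
have [<-|neij] := eqVneq i j.+1; first exact: subxx.
apply: subset_trans (ser_subS _) (IH _ _); lia.
Qed.

Lemma ser_level x : exists2 k, 1 <= k <= m & x \in Ser k :\: Ser k.+1.
Proof.
case: serS => Ser1 [Serm _].
suff: forall n, x \notin Ser n.+1 -> exists2 k, 1 <= k <= n & x \in Ser k :\: Ser k.+1.
  by apply; rewrite Serm inE.
elim=> [|n IH] xn; first by rewrite Ser1 inE in xn.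
have [xSn|/IH[k kn xk]] := boolP (x \in Ser n.+1); first by exists n.+1; rewrite ?leqnn ?inE ?xn.
by exists k => //; lia.
Qed.

Section Level.
Variable k : nat.
Hypothesis km : 1 <= k <= m.

Let idk := ser_ideal km.
Let idk1 := ser_idealS km.

(* Minimality of S_{k+1} < S_k: the ideal generated by g together with S_{k+1} is all of S_k. *)
Lemma ser_level_factor g c : g \in Ser k :\: Ser k.+1 -> c \in Ser k :\: Ser k.+1 ->
  factor op g c.
Proof.
move=> /setDP[gk gk1] /setDP[ck ck1].
pose K := Ser k.+1 :|: [set s | factor op g s].
have idK : ideal_of op [set: T] K.
  split=> [|s i _ /setUP[i1|]]; first exact: subsetT.
    by rewrite !in_setU (ideal_mull idk1) ?(ideal_mulr idk1).
  by rewrite !in_setU !inE => gi; rewrite factor_mull ?factor_mulr ?orbT.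
have k1K : Ser k.+1 \subset K by apply/subsetP=> z z1; rewrite in_setU z1.
have Kk : K \subset Ser k.
  apply/subsetP=> z /setUP[/(subsetP (ser_subS km))//|].
  by rewrite inE => /existsP[p /existsP[q /eqP->]]; rewrite (ideal_lmul1 idk) ?(ideal_rmul1 idk).
case: serS => _ [_ [_ /(_ k km)[_ /(_ K idK k1K Kk)[EK|EK]]]].
  suff : g \in K by rewrite EK (negbTE gk1).
  by rewrite in_setU inE factor_refl orbT.
by move: ck; rewrite -EK in_setU (negbTE ck1) inE.
Qed.

Lemma stem_notin s : s \in stem_set op Ser k -> s \notin Ser k.+1.
Proof.
case/setUP=> [|/setDP[] //]; rewrite !inE => /andP[sk _].
by apply: contra sk => /(subsetP (ser_subS km)).
Qed.

Lemma mem_stem u t : t \in Ser k ->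
  (op u t \notin Ser k.+1) || (op t u \notin Ser k.+1) -> u \in stem_set op Ser k.
Proof.
move=> tk ut1.
have tk1 : t \notin Ser k.+1.
  by apply: contraL ut1 => t1; rewrite negb_or !negbK (ideal_mull idk1 _ t1) (ideal_mulr idk1 _ t1).
have uk1 : u \notin Ser k.+1.
  by apply: contraL ut1 => u1; rewrite negb_or !negbK (ideal_mull idk1 _ u1) (ideal_mulr idk1 _ u1).
rewrite /stem_set in_setU in_setD uk1 /=; case: (boolP (u \in Ser k)) => uk; rewrite ?orbT //.
by rewrite /Fj inE inE uk orbF; apply/exists_inP; exists t; rewrite ?in_setD ?tk ?tk1.
Qed.

Lemma stem_level_factor a : a \in stem_set op Ser k ->
  exists g r, g \in Ser k :\: Ser k.+1 /\ (g = rmul1 op a r \/ g = lmul1 op r a).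
Proof.
case/setUP=> [|ak]; last by exists a, None; split=> //; left.
rewrite inE => /andP[_ /existsP[t /andP[/setDP[tk _] /orP[at1|ta1]]]].
  by exists (op a t), (Some t); rewrite in_setD at1 (ideal_mull idk _ tk); split=> //; left.
by exists (op t a), (Some t); rewrite in_setD ta1 (ideal_mulr idk _ tk); split=> //; right.
Qed.

Lemma mem_stem_mull u t z : t \in Ser k -> z \notin Ser k.+1 ->
  (op u t \in Ser k.+1 -> z \in Ser k.+1) -> u \in stem_set op Ser k.
Proof. by move=> tk zk1 utz; apply: (mem_stem tk); rewrite (contra utz). Qed.

Lemma mem_stem_mulr u t z : t \in Ser k -> z \notin Ser k.+1 ->
  (op t u \in Ser k.+1 -> z \in Ser k.+1) -> u \in stem_set op Ser k.
Proof. by move=> tk zk1 tuz; apply: (mem_stem tk); rewrite (contra tuz) ?orbT. Qed.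

Lemma lr_cycle_level x y ws : lr_cycle op x y ws ->
  x \in Ser k :\: Ser k.+1 -> y \in Ser k :\: Ser k.+1.
Proof.
case: ws => [|w ws] [_ // _ /(lr_cycle_fixed opA)[r [r' [Ex Ey]]]] /setDP[xk xk1].
have yk : y \in Ser k.
  by rewrite Ey; apply/(ideal_mull idk)/(ideal_rmul1 idk)/(ideal_lmul1 idk).
rewrite in_setD yk andbT; apply: contra xk1 => y1.
by rewrite Ex; apply/(ideal_mull idk1)/(ideal_rmul1 idk1)/(ideal_lmul1 idk1).
Qed.

Lemma lr_cycle_stem u v x y ws :
  x \in gen op [set u; v] -> y \in gen op [set u; v] -> all (in1 (gen op [set u; v])) ws ->
  lr_cycle op x y ws -> x \in Ser k :\: Ser k.+1 -> u \in stem_set op Ser k.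
Proof.
move=> xuv yuv wsuv cyc xk.
have /setDP[yk yk1] := lr_cycle_level cyc xk; case/setDP: xk => xk xk1.
case: ws wsuv cyc => [_ []//|w ws /andP[wuv _] cyc].
have [_ _ /(lr_cycle_fixed opA)[r [r' [Ex Ey]]]] := cyc.
case: (lr_cycle_factor opA xuv yuv wuv cyc).
- case/existsP=> p /existsP[q /eqP Ep].
  apply: (@mem_stem_mull _ (lmul1 op q (rmul1 op (lmul1 op w y) r)) x _ xk1) => [|ut1].
    exact/(ideal_lmul1 idk)/(ideal_rmul1 idk)/(ideal_lmul1 idk).
  by rewrite {1}Ex Ep lmul1A // rmul1_op //; apply: (ideal_lmul1 idk1).
- case/existsP=> p /existsP[q /eqP Ep].
  apply: (@mem_stem_mull _ (lmul1 op q (rmul1 op (lmul1 op w x) r')) y _ yk1) => [|ut1].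
    exact/(ideal_lmul1 idk)/(ideal_rmul1 idk)/(ideal_lmul1 idk).
  by rewrite {1}Ey Ep lmul1A // rmul1_op //; apply: (ideal_lmul1 idk1).
- case=> c Ew /existsP[p /existsP[q /eqP Ec]].
  apply: (@mem_stem_mull _ (lmul1 op q y) x _ xk1) => [|ut1]; first exact: (ideal_lmul1 idk).
  rewrite {1}Ex Ew /= Ec lmul1A // rmul1_op // -lmul1_rmul1 // -rmul1_op //.
  exact/(ideal_mull idk1)/(ideal_rmul1 idk1).
Qed.

End Level.

(* a divides an element g of the J-class of c, and c divides g; so a witness t' of
   c \in F^{(k')} turns into a witness for a. *)
Lemma stem_transfer k k' a c : 1 <= k <= m -> k < k' <= m ->
  a \in stem_set op Ser k -> c \in Ser k :\: Ser k.+1 -> c \in stem_set op Ser k' ->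
  a \in stem_set op Ser k'.
Proof.
move=> km kk' ak ck ck'; have k'm : 1 <= k' <= m by lia.
have id' := ser_ideal k'm; have id'1 := ser_idealS k'm.
have [g [r [gk Eg]]] := stem_level_factor km ak.
have /existsP[p /existsP[q /eqP Ec]] := ser_level_factor km gk ck.
case/setUP: ck' => [|/setDP[c' _]]; last first.
  have k'k1 : Ser k' \subset Ser k.+1 by apply: ser_mono; lia.
  by case/setDP: ck => _ /negP[]; apply: (subsetP k'k1).
rewrite inE => /andP[_ /exists_inP[t' /setDP[t'k' _] /orP[ct'|t'c]]]; case: Eg => Eg.
- apply: (@mem_stem_mull k' k'm a (lmul1 op r (lmul1 op q t')) _ _ ct') => [|at1].
    exact/(ideal_lmul1 id')/(ideal_lmul1 id').
  by rewrite Ec Eg lmul1A // !rmul1_op //; apply: (ideal_lmul1 id'1).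
- apply: (@mem_stem_mull k' k'm a (lmul1 op q t') _ _ ct') => [|at1].
    exact: (ideal_lmul1 id').
  by rewrite Ec Eg lmul1A // rmul1_op // lmul1A //; apply/(ideal_lmul1 id'1)/(ideal_lmul1 id'1).
- apply: (@mem_stem_mulr k' k'm a (rmul1 op t' p) _ _ t'c) => [|ta1].
    exact: (ideal_rmul1 id').
  by rewrite Ec Eg -rmul1_op // !rmul1A //; apply/(ideal_rmul1 id'1)/(ideal_rmul1 id'1).
- apply: (@mem_stem_mulr k' k'm a (rmul1 op (rmul1 op t' p) r) _ _ t'c) => [|ta1].
    exact/(ideal_rmul1 id')/(ideal_rmul1 id').
  by rewrite Ec Eg -rmul1_op // rmul1A // -rmul1_op //; apply: (ideal_rmul1 id'1).
Qed.

End PrincipalSeries.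

Section ReesFactor.
Variables (T : finType) (op : T -> T -> T).

Lemma ideal_of_setI (A J : {set T}) : closedb op A -> ideal op J -> ideal_of op A (J :&: A).
Proof.
move=> /closedbP cA idJ; split=> [|s i sA /setIP[iJ iA]]; first exact: subsetIr.
by rewrite !inE (ideal_mull idJ _ iJ) (ideal_mulr idJ _ iJ) !cA.
Qed.

Lemma rees_img_morph (A I : {set T}) : ideal_of op A I ->
  {in A &, {morph rees_img I : p q / op p q >-> rees_op op I p q}}.
Proof.
move=> [_ idI] p q pA qA; rewrite /rees_img.
have [pI|_] := boolP (p \in I); first by rewrite (idI q p qA pI).2.
by have [qI|//] := boolP (q \in I); rewrite (idI p q pA qI).1.
Qed.

Lemma rees_gen_nilpotent (A J M : {set T}) x y :
  closedb op A -> closedb op M -> ideal op J ->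
  x \in A :&: M -> y \in A :&: M -> x \notin J -> y \notin J ->
  nilpotent_on (rees_op op J) (rees_dom M J) ->
  nilpotent_on (rees_op op (J :&: A)) (gen (rees_op op (J :&: A)) [set Some x; Some y]).
Proof.
move=> cA /closedbP cM idJ xAM yAM xJ yJ nilMJ.
have idI := ideal_of_setI cA idJ; move/closedbP: cA => cA.
have idJT : ideal_of op [set: T] J by split=> [|s i _ /(idJ s)]; rewrite ?subsetT.
set I := J :&: A; pose B := rees_img I @: (A :&: M).
have imgE p : p \in A -> rees_img I p = rees_img J p by rewrite /rees_img inE => ->; rewrite andbT.
have opAM : {in A :&: M &, forall p q, op p q \in A :&: M}.
  by move=> p q /setIP[pA pM] /setIP[qA qM]; rewrite inE cA ?cM.
have cB : closedb (rees_op op I) B.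
  apply/closedbP=> _ _ /imsetP[p pAM ->] /imsetP[q qAM ->].
  by rewrite -(rees_img_morph idI) ?imset_f ?opAM //; case/setIP: pAM; case/setIP: qAM.
have opE : {in B &, rees_op op I =2 rees_op op J}.
  move=> _ _ /imsetP[p /setIP[pA _] ->] /imsetP[q /setIP[qA _] ->].
  by rewrite -(rees_img_morph idI) // !imgE ?cA // (rees_img_morph idJT) ?inE.
have genB : gen (rees_op op I) [set Some x; Some y] \subset B.
  apply: gen_min cB; apply/subsetP=> _ /set2P[->|->]; apply/imsetP.
    by exists x; rewrite // imgE ?/rees_img ?(negbTE xJ) //; case/setIP: xAM.
  by exists y; rewrite // imgE ?/rees_img ?(negbTE yJ) //; case/setIP: yAM.
apply: nilpotent_onS genB _; apply: nilpotent_on_eq cB opE _.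
apply: nilpotent_onS nilMJ; apply/subsetP=> _ /imsetP[p /setIP[pA pM] ->].
by rewrite imgE // imset_f.
Qed.

End ReesFactor.

Lemma lr_avoid_adjoined_identity (T : finType) (op : T -> T -> T) x y ws :
  exists ws', [/\ lr op x y ws' = lr op x y ws, size ws' = size ws &
                  has_identity op -> all (fun z => z != None) ws'].
Proof.
have [/existsP[e /forallP eP]|noid] := boolP (has_identity op); last first.
  by exists ws; split=> // /(negP noid).
exists (map (fun z => if z is None then Some e else z) ws); split.
- elim: ws x y => [|z zs IH] x y //=; rewrite !lr_cons -IH.
  by case: z => [c|] //=; have /andP[_ /eqP->] := eP x; have /andP[_ /eqP->] := eP y.
- by rewrite size_map.
- by move=> _; elim: ws => [|[c|] zs IH].
Qed.

Section PseudoNilpotent.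
Variables (T : finType) (op : T -> T -> T).
Hypothesis opPN : pseudo_nilpotent op.

Lemma pseudo_nilpotent_cycle (J : {set T}) x y ws : ideal op J ->
  lr_cycle op x y ws -> x \notin J -> y \notin J ->
  exists2 A, [/\ closedb op A, x \in A & y \in A] &
    ~ nilpotent_on (rees_op op (J :&: A)) (gen (rees_op op (J :&: A)) [set Some x; Some y]).
Proof.
move=> idJ [nexy ws_gt0 cyc] xJ yJ.
have [ws' [Ews' size_ws' noid]] := lr_avoid_adjoined_identity op x y ws.
set A := gen op ([set x; y] :|: [set c | Some c \in ws']).
have xA : x \in A by apply: (subsetP (subset_gen _ _)); rewrite !inE eqxx.
have yA : y \in A by apply: (subsetP (subset_gen _ _)); rewrite !inE eqxx orbT.
have xI : x \notin J :&: A by rewrite inE (negbTE xJ).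
have yI : y \notin J :&: A by rewrite inE (negbTE yJ).
exists A; first by split; rewrite ?closedb_gen.
have idI : ideal_of op A (J :&: A) := ideal_of_setI (closedb_gen _ _) idJ.
have := opPN noid idI (t := 0).
rewrite take0 take_size Ews' cyc size_ws' /=.
move=> /(_ ws_gt0 (elimN eqP nexy) erefl xI yI 0 (leq0n _)).
by rewrite take0 /nn_edge /rees_img (negbTE xI) (negbTE yI).
Qed.

End PseudoNilpotent.

Definition nilpotent_factor (T : finType) (op : T -> T -> T) (Ser : nat -> {set T}) k :=
  nilpotent_on (rees_op op (Ser k.+1)) (rees_dom (Ser k) (Ser k.+1)).

Section Stems.
Variables (T : finType) (op : T -> T -> T).
Hypothesis opA : associative op.
Hypothesis opPN : pseudo_nilpotent op.
Variables (Ser : nat -> {set T}) (m : nat).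
Hypothesis serS : principal_series op Ser m.

Lemma lr_cycle_non_nilpotent_factor k x y ws : 1 <= k <= m ->
  lr_cycle op x y ws -> x \in Ser k :\: Ser k.+1 -> ~ nilpotent_factor op Ser k.
Proof.
move=> km cyc xk; have /setDP[yk yk1] := lr_cycle_level opA serS km cyc xk.
case/setDP: xk => xk xk1.
have [A [cA xA yA] nnA] := pseudo_nilpotent_cycle opPN (ser_idealS serS km) cyc xk1 yk1.
apply: contra_not nnA; apply: rees_gen_nilpotent; rewrite ?inE ?xA ?yA ?xk ?yk //.
- exact/ideal_closedb/(ser_ideal serS km).
- exact: (ser_idealS serS km).
Qed.

Lemma non_nilpotent_gen2_stem u v : ~ nilpotent_on op (gen op [set u; v]) ->
  exists k, [/\ 1 <= k <= m, ~ nilpotent_factor op Ser k,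
                u \in stem_set op Ser k & v \in stem_set op Ser k].
Proof.
move=> nnuv; have [x [y [ws [xuv yuv wsuv cyc]]]] := non_nilpotent_cycle (closedb_gen _ _) nnuv.
have [k km xk] := ser_level serS x.
exists k; split=> //.
- exact: lr_cycle_non_nilpotent_factor cyc xk.
- exact (lr_cycle_stem opA serS km xuv yuv wsuv cyc xk).
- rewrite setUC in xuv yuv wsuv; exact (lr_cycle_stem opA serS km xuv yuv wsuv cyc xk).
Qed.

Lemma stem_ascend k a b : 1 <= k <= m -> ~ nilpotent_factor op Ser k -> ~ is_root op Ser k ->
  a \in stem_set op Ser k -> b \in stem_set op Ser k ->
  exists k', [/\ k < k' <= m, ~ nilpotent_factor op Ser k',
                 a \in stem_set op Ser k' & b \in stem_set op Ser k'].
Proof.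
move=> km nnk nroot ak bk.
have [c [d [ck dk1 nncd]]] : exists c d, [/\ c \in Ser k :\: Ser k.+1, d \in Ser k.+1 &
    ~ nilpotent_on op (gen op [set c; d])].
  apply: NNPP => nocd; apply: nroot; split=> // c d ck dk1.
  by apply: NNPP => nncd; apply: nocd; exists c, d.
have [k' [k'm nnk' ck' dk']] := non_nilpotent_gen2_stem nncd.
have kk' : k < k'.
  rewrite ltnNge; apply: contraNN (stem_notin serS k'm dk') => k'k.
  by apply: (subsetP (ser_mono serS _ _)) dk1; lia.
have kk'm : k < k' <= m by lia.
exists k'; split=> //.
- exact (stem_transfer opA serS km kk'm ak ck ck').
- exact (stem_transfer opA serS km kk'm bk ck ck').
Qed.

End Stems.

Theorem corollary3p9 (T : finType) (op : T -> T -> T) (assoc : associative op)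
    (Ser : nat -> {set T}) (m : nat) (a b : T) :
  pseudo_nilpotent op ->
  principal_series op Ser m ->
  nn_edge op a b ->
  exists i, [/\ 1 <= i <= m, is_root op Ser i,
                a \in stem_set op Ser i & b \in stem_set op Ser i].
Proof.
move=> opPN serS ab.
have [k [km nnk ak bk]] := non_nilpotent_gen2_stem assoc opPN serS ab.
elim: {k}(m - k).+1 {-2}k (ltnSn (m - k)) => // n IH k /ltnSE mk in km nnk ak bk *.
have [root|nroot] := classic (is_root op Ser k); first by exists k.
have [k' [kk' nnk' ak' bk']] := stem_ascend assoc opPN serS km nnk nroot ak bk.
by apply: (IH k') => //; lia.
Qed.
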